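(* Let $G$ be a group and $A_0\subseteq\operatorname{Aut}(G)$ a subgroup such that $G$ is an $\mathcal{L}(A_0)$-equational domain. Let $I$ be a set and $H=\prod_{i\in I}G$ the direct power of $G$, whose elements are tuples $(g_i\mid i\in I)$. Let $\mathcal{P}$ be a set of permutations of $I$ that is transitive on $I$ (for all $i,j\in I$ there is $\pi\in\mathcal{P}$ with $\pi(i)=j$). For $\phi\in A_0$ and $\pi\in\mathcal{P}$ define automorphisms of $H$ by $f_\phi((g_i\mid i\in I))=(\phi(g_i)\mid i\in I)$ and $\sigma_\pi((g_i\mid i\in I))=(g_{\pi(i)}\mid i\in I)$, and let $A\subseteq\operatorname{Aut}(H)$ be the group generated by $\{f_\phi,\sigma_\pi\mid\phi\in A_0,\pi\in\mathcal{P}\}$. Then $H$ is an $\mathcal{L}(A)$-equational domain.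
   Context: For a group $K$ and a subgroup $B\subseteq\operatorname{Aut}(K)$, $\mathcal{L}(B)=\{\cdot,{}^{-1},1\}\cup\{\psi\mid\psi\in B\}$ is the group language with a unary function symbol for each $\psi\in B$, interpreted as $\psi$. $\mathcal{L}(B)$-equations are $t(X)=1$ with $t$ an $\mathcal{L}(B)$-term (equivalently a product $\psi_1(x_{i_1}^{\varepsilon_1})\cdots\psi_k(x_{i_k}^{\varepsilon_k})$, $\psi_j\in B$, $\varepsilon_j=\pm1$); systems are arbitrary sets of equations and $V_K(S)$ is the solution set in $K^n$. A subset of $K^n$ is $\mathcal{L}(B)$-algebraic if it equals $V_K(S)$ for some $\mathcal{L}(B)$-system $S$ in $n$ variables. $K$ is an $\mathcal{L}(B)$-equational domain if for every $n$ the union of any two $\mathcal{L}(B)$-algebraic subsets of $K^n$ is $\mathcal{L}(B)$-algebraic. *)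

From mathcomp Require Import all_boot.
From Stdlib Require Import FunctionalExtensionality.
Set Implicit Arguments. Unset Strict Implicit. Unset Printing Implicit Defensive.

Record group := Group {
  gcar :> Type;
  gmul : gcar -> gcar -> gcar;
  ginv : gcar -> gcar;
  gone : gcar;
  gmulA : forall x y z, gmul (gmul x y) z = gmul x (gmul y z);
  gmul1 : forall x, gmul gone x = x;
  gmulV : forall x, gmul (ginv x) x = gone }.

Definition is_aut (K : group) (f : K -> K) : Prop :=
  (forall x y, f (gmul x y) = gmul (f x) (f y)) /\ bijective f.

Definition aut_subgroup (K : group) (B : (K -> K) -> Prop) : Prop :=
  (forall f, B f -> is_aut f) /\
  B id /\
  (forall f g, B f -> B g -> B (f \o g)) /\
  (forall f g, B f -> cancel f g -> cancel g f -> B g).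

Definition gen_aut_subgroup (K : group) (Gen : (K -> K) -> Prop) : (K -> K) -> Prop :=
  fun f => forall B, aut_subgroup B -> (forall g, Gen g -> B g) -> B f.

(* Terms in n variables of the language {.,^-1,1} together with unary
   function symbols (here: any function K -> K; L(B)-terms are those whose
   function symbols all lie in B). *)
Inductive term (K : Type) (n : nat) : Type :=
  | tVar of 'I_n
  | tOne
  | tMul of term K n & term K n
  | tInv of term K n
  | tApp of (K -> K) & term K n.

Fixpoint is_Lterm (K : Type) (n : nat) (B : (K -> K) -> Prop) (t : term K n) : Prop :=
  match t with
  | tVar _ => True
  | tOne => True
  | tMul t1 t2 => is_Lterm B t1 /\ is_Lterm B t2
  | tInv t1 => is_Lterm B t1
  | tApp f t1 => B f /\ is_Lterm B t1
  end.

Fixpoint eval (K : group) (n : nat) (x : 'I_n -> K) (t : term K n) : K :=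
  match t with
  | tVar i => x i
  | tOne => gone K
  | tMul t1 t2 => gmul (eval x t1) (eval x t2)
  | tInv t1 => ginv (eval x t1)
  | tApp f t1 => f (eval x t1)
  end.

Definition V (K : group) (n : nat) (S : term K n -> Prop) : ('I_n -> K) -> Prop :=
  fun x => forall t, S t -> eval x t = gone K.

Definition L_algebraic (K : group) (B : (K -> K) -> Prop) (n : nat)
  (Y : ('I_n -> K) -> Prop) : Prop :=
  exists S : term K n -> Prop,
    (forall t, S t -> is_Lterm B t) /\ (forall x, Y x <-> V S x).

Definition L_equational_domain (K : group) (B : (K -> K) -> Prop) : Prop :=
  forall (n : nat) (Y1 Y2 : ('I_n -> K) -> Prop),
    L_algebraic B Y1 -> L_algebraic B Y2 ->
    L_algebraic B (fun x => Y1 x \/ Y2 x).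

Section Power.
Variables (G : group) (I : Type).
Let pmul (x y : I -> G) := fun i => gmul (x i) (y i).
Let pinv (x : I -> G) := fun i => ginv (x i).
Let pone : I -> G := fun _ => gone G.
Lemma pmulA x y z : pmul (pmul x y) z = pmul x (pmul y z).
Proof. apply: functional_extensionality => i; exact: gmulA. Qed.
Lemma pmul1 x : pmul pone x = x.
Proof. apply: functional_extensionality => i; exact: gmul1. Qed.
Lemma pmulV x : pmul (pinv x) x = pone.
Proof. apply: functional_extensionality => i; exact: gmulV. Qed.
Definition power_group : group := @Group (I -> G) pmul pinv pone pmulA pmul1 pmulV.
End Power.

Definition f_aut (G : group) (I : Type) (phi : G -> G) : power_group G I -> power_group G I :=
  fun g i => phi (g i).
Definition sigma_aut (G : group) (I : Type) (pi : I -> I) : power_group G I -> power_group G I :=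
  fun g i => g (pi i).

From mathcomp Require Import all_boot.
From Stdlib Require Import Classical FunctionalExtensionality.
Set Implicit Arguments. Unset Strict Implicit. Unset Printing Implicit Defensive.

(* Since G is an equational domain, the "axes" {(a, b) | a = 1 \/ b = 1} of G^2
   are cut out by an L(A0)-system S0(a, b).  Given systems S1, S2 for Y1, Y2 in
   H^n, the union Y1 \/ Y2 is cut out by the equations s(sigma_pi t1, t2) = 1,
   evaluated coordinatewise, for s in S0, t1 in S1, t2 in S2 and pi in P.  If x
   lies in neither Y1 nor Y2, pick t1 with a nontrivial coordinate j, t2 with a
   nontrivial coordinate k, and pi with pi k = j: coordinate k of
   (sigma_pi t1, t2) is the pair (t1_j, t2_k), off the axes, so some s in S0
   fails there. *)

Lemma gen_aut_subgroup_gen (K : group) (Gen : (K -> K) -> Prop) f :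
  Gen f -> gen_aut_subgroup Gen f.
Proof. by move=> Gf B _; apply. Qed.

Lemma not_V (K : group) n (S : term K n -> Prop) x :
  ~ V S x -> exists2 t, S t & eval x t <> gone K.
Proof.
move=> notVx; apply: NNPP => nex; apply: notVx => t St.
by apply: NNPP => ne1; apply: nex; exists t.
Qed.

Lemma L_algebraic_coord_one (K : group) (B : (K -> K) -> Prop) n (j : 'I_n) :
  L_algebraic B (fun z : 'I_n -> K => z j = gone K).
Proof.
exists (fun t => t = tVar K j); split=> [t -> // | z].
by split=> [zj1 t -> // | Vz]; exact: (Vz (tVar K j)).
Qed.

Lemma L_algebraic_axes (K : group) (B : (K -> K) -> Prop) :
  L_equational_domain B ->
  L_algebraic B (fun z : 'I_2 -> K => z ord0 = gone K \/ z ord_max = gone K).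
Proof. by move=> domB; apply: domB; apply: L_algebraic_coord_one. Qed.

Lemma power_neq_one (G : group) (I : Type) (g : power_group G I) :
  g <> gone _ -> exists i, g i <> gone G.
Proof.
move=> g_neq1; apply: NNPP => nex; apply: g_neq1.
by apply: functional_extensionality => i; apply: NNPP => ne1; apply: nex; exists i.
Qed.

Section PointwiseTerm.
Variables (G : group) (I : Type) (n : nat).
Notation H := (power_group G I).

Fixpoint pointwise_term m (s : term G m) (u : 'I_m -> term H n) : term H n :=
  match s with
  | tVar i => u i
  | tOne => tOne _ _
  | tMul a b => tMul (pointwise_term a u) (pointwise_term b u)
  | tInv a => tInv (pointwise_term a u)
  | tApp f a => tApp (@f_aut G I f) (pointwise_term a u)
  end.

Lemma eval_pointwise_term (x : 'I_n -> H) m (s : term G m) u k :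
  eval x (pointwise_term s u) k = eval (fun i => eval x (u i) k) s.
Proof. by elim: s => //= [a IHa b IHb | a IHa | f a IHa]; rewrite -?IHa -?IHb. Qed.

Lemma Lterm_pointwise_term (A0 : (G -> G) -> Prop) (A : (H -> H) -> Prop)
    m (s : term G m) u :
  (forall phi, A0 phi -> A (@f_aut G I phi)) ->
  is_Lterm A0 s -> (forall i, is_Lterm A (u i)) -> is_Lterm A (pointwise_term s u).
Proof.
move=> A0_A + Au; elim: s => /= [i _ | // | a IHa b IHb | a IHa | f a IHa].
- exact: Au.
- by case=> /IHa ? /IHb.
- exact: IHa.
- by case=> /A0_A ? /IHa.
Qed.

End PointwiseTerm.

Section UnionSystem.
Variables (G : group) (I : Type) (n : nat) (P : (I -> I) -> Prop).
Notation H := (power_group G I).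
Variables (S0 : term G 2 -> Prop) (S1 S2 : term H n -> Prop).
Hypothesis V_S0 : forall z, z ord0 = gone G \/ z ord_max = gone G <-> V S0 z.

Definition union_system : term H n -> Prop := fun t =>
  exists s t1 t2 pi, [/\ S0 s, S1 t1, S2 t2, P pi &
    t = pointwise_term s (tnth [tuple tApp (@sigma_aut G I pi) t1; t2])].

Lemma Lterm_union_system (A0 : (G -> G) -> Prop) (A : (H -> H) -> Prop) t :
  (forall phi, A0 phi -> A (@f_aut G I phi)) ->
  (forall pi, P pi -> A (@sigma_aut G I pi)) ->
  (forall s, S0 s -> is_Lterm A0 s) ->
  (forall t1, S1 t1 -> is_Lterm A t1) ->
  (forall t2, S2 t2 -> is_Lterm A t2) ->
  union_system t -> is_Lterm A t.
Proof.
move=> A0_A P_A LS0 LS1 LS2 [s [t1 [t2 [pi [S0s S1t1 S2t2 Ppi ->]]]]].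
apply: (Lterm_pointwise_term A0_A (LS0 _ S0s)) => -[[|[|]]] //= ?.
- by split; [exact: P_A | exact: LS1].
- exact: LS2.
Qed.

Lemma V_union_systemW x : V S1 x \/ V S2 x -> V union_system x.
Proof.
move=> Vx _ [s [t1 [t2 [pi [S0s S1t1 S2t2 _ ->]]]]].
apply: functional_extensionality => k; rewrite eval_pointwise_term.
apply: (proj1 (V_S0 _)) S0s => /=.
by case: Vx => [V1x | V2x]; [left; rewrite /sigma_aut V1x | right; rewrite V2x].
Qed.

Hypothesis P_transitive : forall i j : I, exists pi, P pi /\ pi i = j.

Lemma V_union_system x : V union_system x <-> V S1 x \/ V S2 x.
Proof.
split; last exact: V_union_systemW.
move=> Vx; apply: NNPP => /not_or_and [/not_V [t1 S1t1 /power_neq_one [j t1j]]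
                                        /not_V [t2 S2t2 /power_neq_one [k t2k]]].
have [pi [Ppi pik]] := P_transitive k j.
set u := tnth [tuple tApp (@sigma_aut G I pi) t1; t2].
have off_axes : ~ V S0 (fun i => eval x (u i) k).
  by move=> /V_S0 [] /=; rewrite /sigma_aut ?pik.
have [s S0s] := not_V off_axes; apply.
have := Vx _ (ex_intro _ s (ex_intro _ t1 (ex_intro _ t2 (ex_intro _ pi
  (And5 S0s S1t1 S2t2 Ppi erefl))))).
by move=> /(f_equal (fun g => g k)); rewrite eval_pointwise_term.
Qed.

End UnionSystem.

Theorem corollary2 (G : group) (A0 : (G -> G) -> Prop)
  (hA0 : aut_subgroup A0) (hdom : L_equational_domain A0)
  (I : Type) (P : (I -> I) -> Prop)
  (hP : forall pi, P pi -> bijective pi)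
  (htrans : forall i j : I, exists pi, P pi /\ pi i = j) :
  L_equational_domain
    (gen_aut_subgroup (K := power_group G I)
       (fun f => (exists phi, A0 phi /\ f = @f_aut G I phi) \/
                 (exists pi, P pi /\ f = @sigma_aut G I pi))).
Proof.
set A := gen_aut_subgroup _.
have A0_A phi : A0 phi -> A (@f_aut G I phi).
  by move=> A0phi; apply: gen_aut_subgroup_gen; left; exists phi.
have P_A pi : P pi -> A (@sigma_aut G I pi).
  by move=> Ppi; apply: gen_aut_subgroup_gen; right; exists pi.
have [S0 [LS0 V_S0]] := L_algebraic_axes hdom.
move=> n Y1 Y2 [S1 [LS1 Y1E]] [S2 [LS2 Y2E]].
exists (union_system P S0 S1 S2); split.
- by move=> t; apply: Lterm_union_system A0_A P_A LS0 LS1 LS2.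
- move=> x; rewrite Y1E Y2E; symmetry; exact: V_union_system V_S0 htrans x.
Qed.
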